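(* For integers $0\le m\le n$, $$\sum_{j=0}^{n-m}(-2)^{-j}\binom{n-m+j}{j}\binom{2n}{n+m+j}=2^{m-n}\binom{n}{m}\frac{\binom{2n}{n}}{\binom{2m}{m}}.$$ *)

From mathcomp Require Import all_boot all_algebra.

From mathcomp Require Import all_boot all_algebra.
From mathcomp Require Import ring zify.
Import GRing.Theory Num.Theory.
Local Open Scope ring_scope.

(* With [k = n - m] and [binom(2n, n+m+j) = binom(2n, k-j)] the left-hand side
   is [binsum k (2n)].  A Zeilberger certificate [binsum_cert] shows that
   [(N + 1 - 2k) binsum k (N + 2) = (N + 1) binsum k N].  The product
   [halfbin k n] obeys the same recurrence in [n] and agrees with [binsum k 0]
   at [n = 0], so [binsum k (2n) = halfbin k n], and [halfbin k (m + k)] is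
   evaluated by induction on [k]. *)

Lemma mul_central_bin k :
  (k.+1 * 'C((2 * k).+2, k.+1) = 2 * (2 * k).+1 * 'C(2 * k, k))%N.
Proof.
have sym : 'C((2 * k).+1, k.+1) = 'C((2 * k).+1, k).
  by rewrite -[RHS]bin_sub; [congr 'C(_, _) | ]; lia.
rewrite -(mul_bin_diag (2 * k).+2) /= -sym -mulnA (mul_bin_diag (2 * k).+1).
by rewrite mulnA mulnS mul2n.
Qed.

Section BinomialSum.

Variable R : numFieldType.

Lemma natr_mul_bin_left n k :
  k.+1%:R * 'C(n, k.+1)%:R = (n%:R - k%:R) * 'C(n, k)%:R :> R.
Proof.
have [le_kn | lt_nk] := leqP k n; first by rewrite -natrB // -!natrM mul_bin_left.
by rewrite !bin_small ?mulr0 // ltnW.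
Qed.

Lemma natr_mul_bin_down n k :
  n%:R * 'C(n.-1, k)%:R = (n%:R - k%:R) * 'C(n, k)%:R :> R.
Proof.
have [le_kn | lt_nk] := leqP k n; first by rewrite -natrB // -!natrM mul_bin_down.
by rewrite !bin_small ?mulr0 //; case: n lt_nk => // n /ltnW.
Qed.

Lemma natr_bin_neq0 n k : (k <= n)%N -> 'C(n, k)%:R != 0 :> R.
Proof. by move=> le_kn; rewrite pnatr_eq0 -lt0n bin_gt0. Qed.

Lemma bin_contiguity N p :
  (N.+1%:R - 2 * p.+1%:R) * 'C(N.+2, p.+1)%:R - N.+1%:R * 'C(N, p.+1)%:R
  = - p.+2%:R * 'C(N.+1, p)%:R :> R.
Proof.
rewrite binS (natr_mul_bin_down N.+1) /=.
transitivity (- (p.+1%:R * 'C(N.+1, p.+1)%:R)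
              + (N.+1%:R - 2 * p.+1%:R) * 'C(N.+1, p)%:R : R); first by ring.
by rewrite natr_mul_bin_left -!natr1; ring.
Qed.

Definition sum_coef k j : R := (-2) ^- j * 'C(k + j, j)%:R.

Definition binsum k N : R := \sum_(j < k.+1) sum_coef k j * 'C(N, k - j)%:R.

Lemma sum_coefS k j :
  -2 * j.+1%:R * sum_coef k j.+1 = (k + j).+1%:R * sum_coef k j.
Proof.
have diag : (k + j).+1%:R * 'C(k + j, j)%:R = j.+1%:R * 'C(k + j.+1, j.+1)%:R :> R.
  by rewrite -!natrM addnS (mul_bin_diag (k + j).+1).
rewrite /sum_coef exprSr invfM.
have n2 : (-2 : R) != 0 by rewrite oppr_eq0 pnatr_eq0.
by rewrite [RHS]mulrCA diag; field; rewrite expf_neq0.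
Qed.

Definition binsum_cert k N j : R := -2 * j%:R * sum_coef k j * 'C(N.+1, k - j)%:R.

Lemma binsum_certificate k N j : (j < k)%N ->
  sum_coef k j * ((N.+1%:R - 2 * k%:R) * 'C(N.+2, k - j)%:R
                  - N.+1%:R * 'C(N, k - j)%:R)
  = binsum_cert k N j - binsum_cert k N j.+1.
Proof.
move=> ltjk; rewrite /binsum_cert.
have [p ek] : exists p, k = (p.+1 + j)%N by exists (k - j.+1)%N; lia.
have -> : (k - j = p.+1)%N by lia.
have -> : (k - j.+1 = p)%N by lia.
rewrite sum_coefS.
have -> : (N.+1%:R - 2 * k%:R) * 'C(N.+2, p.+1)%:R - N.+1%:R * 'C(N, p.+1)%:R
          = - p.+2%:R * 'C(N.+1, p)%:R - 2 * j%:R * 'C(N.+2, p.+1)%:R :> R.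
  by rewrite -bin_contiguity ek natrD; ring.
have -> : (k + j).+1%:R = p.+2%:R + 2 * j%:R :> R.
  by rewrite -natrM -natrD ek; congr _%:R; lia.
by rewrite binS; ring.
Qed.

Lemma binsum_rec k N :
  (N.+1%:R - 2 * k%:R) * binsum k N.+2 = N.+1%:R * binsum k N.
Proof.
apply/eqP; rewrite -subr_eq0; apply/eqP.
rewrite /binsum !mulr_sumr -sumrB.
transitivity (\sum_(j < k.+1) sum_coef k j * ((N.+1%:R - 2 * k%:R)
                 * 'C(N.+2, k - j)%:R - N.+1%:R * 'C(N, k - j)%:R)).
  by apply: eq_bigr => j _; ring.
set F := fun i => binsum_cert k N i - binsum_cert k N i.+1.
rewrite big_ord_recr /= (eq_bigr (fun i : 'I_k => F i)); last first.
  by move=> i _; apply: binsum_certificate.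
rewrite -(big_mkord xpredT F) (telescope_sumr_eq (fun i => - binsum_cert k N i)) //;
  last by move=> i _; rewrite /F opprK addrC.
by rewrite /binsum_cert subnn !bin0 mulr0 mul0r; ring.
Qed.

Lemma binsum0 k : binsum k 0 = (-2) ^- k * 'C(2 * k, k)%:R.
Proof.
rewrite /binsum big_ord_recr big1 => [|j _] /=; last first.
  by rewrite bin0n subn_eq0 leqNgt ltn_ord mulr0.
by rewrite subnn bin0 mulr1 add0r /sum_coef addnn -mul2n.
Qed.

Lemma bin_succE n k :
  'C(n, k.+1)%:R = (n%:R - k%:R) * 'C(n, k)%:R / k.+1%:R :> R.
Proof.
have nk : k.+1%:R != 0 :> R by rewrite pnatr_eq0.
by rewrite -natr_mul_bin_left mulrC mulKf.
Qed.

Lemma central_binE k :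
  'C(2 * k.+1, k.+1)%:R = 2 * (2 * k).+1%:R * 'C(2 * k, k)%:R / k.+1%:R :> R.
Proof.
have nk : k.+1%:R != 0 :> R by rewrite pnatr_eq0.
by rewrite -[LHS](mulKf nk) -[in LHS]natrM mulnS add2n mul_central_bin !natrM mulrC.
Qed.

(* [halfbin k n = 2^k * binom(n - 1/2, k)], a generalized binomial coefficient. *)
Definition halfbin k n : R :=
  \prod_(i < k) ((2 * n%:R - 1 - 2 * i%:R) / i.+1%:R).

Lemma halfbin0 k : halfbin k 0 = (-2) ^- k * 'C(2 * k, k)%:R.
Proof.
elim: k => [|k IH]; first by rewrite /halfbin big_ord0 expr0 invr1 mul1r.
rewrite /halfbin big_ord_recr /= -/(halfbin k 0) IH.
have nk : k.+1%:R != 0 :> R by rewrite pnatr_eq0.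
have n2 : (-2 : R) != 0 by rewrite oppr_eq0 pnatr_eq0.
rewrite central_binE exprSr invfM -[(2 * k).+1%:R]natr1 natrM.
by field; rewrite addrC natr1 nk expf_neq0.
Qed.

Lemma halfbin_rec k n :
  ((2 * n).+1%:R - 2 * k%:R) * halfbin k n.+1 = (2 * n).+1%:R * halfbin k n.
Proof.
elim: k => [|k IH]; first by rewrite /halfbin !big_ord0 mulr0 subr0.
rewrite /halfbin !big_ord_recr /= -/(halfbin k n.+1) -/(halfbin k n).
transitivity (((2 * n).+1%:R - 2 * k%:R - 2) / k.+1%:R
              * (((2 * n).+1%:R - 2 * k%:R) * halfbin k n.+1)).
  by rewrite -!natr1 !natrM; ring.
by rewrite IH -!natr1 !natrM; ring.
Qed.

Lemma binsum_even k n : binsum k (2 * n) = halfbin k n.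
Proof.
elim: n => [|n IH]; first by rewrite muln0 binsum0 halfbin0.
have odd_neq : (2 * n).+1%:R - 2 * k%:R != 0 :> R.
  by rewrite subr_eq0 -natrM eqr_nat; lia.
apply: (mulfI odd_neq).
by rewrite mulnS add2n binsum_rec halfbin_rec IH.
Qed.

Lemma halfbin_closed m k :
  halfbin k (m + k) = 2^-1 ^+ k * 'C(m + k, m)%:R
                      * ('C(2 * (m + k), m + k)%:R / 'C(2 * m, m)%:R).
Proof.
elim: k m => [|k IH] m.
  rewrite /halfbin big_ord0 addn0 binn expr0 !mul1r divff //.
  by rewrite natr_bin_neq0 ?leq_pmull.
rewrite /halfbin big_ord_recr /= -/(halfbin k (m + k.+1)) addnS -addSn IH.
have nC : 'C(2 * m, m)%:R != 0 :> R by rewrite natr_bin_neq0 ?leq_pmull.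
have nm : m.+1%:R != 0 :> R by rewrite pnatr_eq0.
have nk : k.+1%:R != 0 :> R by rewrite pnatr_eq0.
have odd2 : (2 * m).+1%:R = 2 * m.+1%:R - 1 :> R by rewrite -!natr1 natrM; ring.
have nodd : 2 * m.+1%:R - 1 != 0 :> R by rewrite -odd2 pnatr_eq0.
rewrite bin_succE (central_binE m) odd2 !natrD exprSr.
by field; rewrite ![1 + _]addrC !natr1 nC nk nm nodd.
Qed.

End BinomialSum.

Theorem lemma4 (m n : nat) (hmn : (m <= n)%N) :
  \sum_(0 <= j < (n - m).+1)
     ((-2 : rat) ^- j) * ('C((n - m + j)%N, j))%:R * ('C(2 * n, (n + m + j)%N))%:R
  = (2 : rat)^-1 ^+ (n - m) * ('C(n, m))%:R
      * (('C(2 * n, n))%:R / ('C(2 * m, m))%:R).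
Proof.
have [k ->] : exists k, n = (m + k)%N by exists (n - m)%N; lia.
rewrite addKn -halfbin_closed -binsum_even /binsum big_mkord.
apply: eq_bigr => j _; rewrite /sum_coef -(bin_sub (_ : k - j <= 2 * (m + k))%N).
  by congr (_ * 'C(_, _)%:R); have := ltn_ord j; lia.
by have := ltn_ord j; lia.
Qed.
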